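(* Let $X_1, \dots, X_n$ be independent, identically distributed random variables taking values in $[0, \infty)$, with common distribution function $F$. Suppose that (1) $F$ has a continuous density $f$ in a neighborhood of $0$ which is nonvanishing there (in particular $f(0) \neq 0$), and (2) $1 - F \in L^p([0, \infty))$ for some $p > 0$. Then, as $n \to \infty$, \[ \mathbb{E}\big(\min(X_1, \dots, X_n)\big) \sim \frac{1}{f(0)(n+1)}. \]
   Context: $a_n \sim b_n$ means $a_n / b_n \to 1$ as $n \to \infty$. *)

From HB Require Import structures.
From mathcomp Require Import all_boot all_order all_algebra.
From mathcomp Require Import all_classical all_reals all_analysis.
Set Implicit Arguments. Unset Strict Implicit. Unset Printing Implicit Defensive.
Import Order.TTheory GRing.Theory Num.Theory.
Import numFieldNormedType.Exports.
Local Open Scope classical_set_scope.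
Local Open Scope ring_scope.

(* Mutual independence of a finite family of real random variables:
   the product rule for preimages of arbitrary Borel sets (taking B i = setT
   for the indices not in a subfamily recovers the rule for every subfamily). *)
Definition mutually_independent {d} {T : measurableType d} {R : realType}
  (P : probability T R) (n : nat) (X : 'I_n -> T -> R) : Prop :=
  forall B : 'I_n -> set R, (forall i, measurable (B i)) ->
    P (\bigcap_(i in [set: 'I_n]) (X i @^-1` B i)) =
    (\prod_(i < n) P (X i @^-1` B i))%E.

(* Expectation of min(X_1,...,X_n), computed in the extended reals
   (the empty minimum, n = 0, is +oo). *)
Definition expect_min {d} {T : measurableType d} {R : realType}
  (P : probability T R) (n : nat) (X : 'I_n -> T -> R) : \bar R :=
  (\int[P]_w (\big[Order.min/+oo%E]_(i < n) (X i w)%:E))%E.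

From HB Require Import structures.
From mathcomp Require Import all_boot all_order all_algebra.
From mathcomp Require Import all_classical all_reals all_analysis.
From mathcomp Require Import ring lra measurable_realfun.
Import Order.TTheory GRing.Theory Num.Theory.
Import numFieldNormedType.Exports.
Local Open Scope classical_set_scope.
Local Open Scope ring_scope.

(* By the tail formula for expectations and independence,
   E min(X_1, ..., X_n) = \int_0^oo (1 - F)^n.  Near 0, F x = f(0) x + o(x),
   so on a short interval [0, eta] the integrand is squeezed between
   (1 - b x)^n for slopes b slightly above and slightly below f(0); these
   integrate to (1 - (1 - b eta)^(n+1)) / (b (n+1)).  Beyond eta,
   0 <= 1 - F <= r := 1 - b eta < 1, hence (1 - F)^n <= r^(n-k) (1 - F)^p for
   an integer k >= p, and the L^p hypothesis makes the tail O(r^n) = o(1/n). *)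

Section distribution_function.
Context {R : realType} {d : measure_display} {T : measurableType d}.
Context {P : probability T R} {X : {mfun T >-> R}} {F : R -> R}.
Hypothesis XF : forall x, P [set w | X w <= x] = (F x)%:E.

Let measurable_le_set x : measurable [set w | X w <= x].
Proof.
have -> : [set w | X w <= x] = X @^-1` `]-oo, x].
  by apply/seteqP; split => w; rewrite /= in_itv.
exact: measurable_funPTI.
Qed.

Lemma cdf_ge0 x : 0 <= F x.
Proof. by rewrite -lee_fin -XF. Qed.

Lemma cdf_le1 x : F x <= 1.
Proof. by rewrite -lee_fin -XF; exact: probability_le1. Qed.

Lemma cdf_nondecreasing : {homo F : x y / x <= y}.
Proof.
move=> x y xy; rewrite -lee_fin -!XF; apply: le_measure; rewrite ?inE //.
by move=> w /= /le_trans; apply.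
Qed.

Lemma ccdf_itv r : P (X @^-1` `]r, +oo[) = (1 - F r)%:E.
Proof.
have -> : X @^-1` `]r, +oo[ = ~` [set w | X w <= r].
  by apply/seteqP; split => w /=; rewrite in_itv /= andbT ltNge => /negP.
by rewrite probability_setC // XF EFinB.
Qed.

End distribution_function.

Section expectation_of_minimum.
Context {R : realType} {d : measure_display} {T : measurableType d}.
Variable P : probability T R.
Local Open Scope ereal_scope.

Lemma measurable_bigmin_EFin (I : Type) (s : seq I) (X : I -> {mfun T >-> R}) :
  measurable_fun setT (fun w => \big[Order.min/+oo]_(i <- s) (X i w)%:E).
Proof.
elim: s => [|i s IHs].
  by under eq_fun do rewrite big_nil; exact: measurable_cst.
under eq_fun do rewrite big_cons.
by apply: measurable_mine => //; exact/measurable_EFinP.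
Qed.

Lemma expect_minE (n : nat) (X : 'I_n -> {mfun T >-> R}) (F : R -> R) :
  (0 < n)%N ->
  mutually_independent P (fun i => (X i : T -> R)) ->
  (forall i w, 0 <= X i w)%R ->
  (forall i x, P [set w | (X i w <= x)%R] = (F x)%:E) ->
  expect_min P (fun i => (X i : T -> R)) =
  \int[lebesgue_measure]_(x in `[0%R, +oo[) ((1 - F x) ^+ n)%:E.
Proof.
move=> n_gt0 indep X_ge0 XF.
pose m w := \big[Order.min/+oo]_(i < n) (X i w)%:E.
have m_ge0 w : 0 <= m w by apply: le_bigmin => // i _; rewrite lee_fin.
have m_fin w : m w \is a fin_num.
  by rewrite ge0_fin_numE // (le_lt_trans (bigmin_le _ (Ordinal n_gt0) _)) ?ltry.
have mY : (fine \o m) \in mfun.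
  by rewrite inE; apply: measurableT_comp => //; exact: measurable_bigmin_EFin.
pose Y : {mfun T >-> R} := mfun_Sub mY.
have YE w : (Y w)%:E = m w by rewrite /= fineK.
have preY r : Y @^-1` `]r, +oo[ = \bigcap_(i in [set: 'I_n]) (X i @^-1` `]r, +oo[).
  apply/seteqP; split => w /=; rewrite in_itv /= andbT -lte_fin YE.
    by move=> /bigmin_gtP[_ Xr] i _ /=; rewrite in_itv /= andbT -lte_fin Xr.
  move=> Xr; apply/bigmin_gtP; split => [|i _]; first by rewrite ltry.
  by have := Xr i I; rewrite /= in_itv /= andbT lte_fin.
transitivity 'E_P[Y].
  by rewrite expectation_def; apply: eq_integral => w _; rewrite YE.
rewrite ge0_expectation_ccdf; last by move=> w; rewrite -lee_fin YE.
apply: eq_integral => r _.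
rewrite /ccdf /distribution /pushforward preY indep; last by move=> i; exact: measurable_itv.
under eq_bigr => i _ do rewrite (ccdf_itv (XF i)).
by rewrite prodEFin prodr_const card_ord.
Qed.

End expectation_of_minimum.

Section geometric_decay.
Context {R : realType}.

Lemma bernoulli_ineq (t : R) n : 0 <= t -> 1 + n%:R * t <= (1 + t) ^+ n.
Proof.
move=> t_ge0; elim: n => [|n IHn]; first by rewrite mul0r addr0 expr0.
have := exprn_ge0 n (addr_ge0 ler01 t_ge0).
have := mulr_ge0 (ler0n R n) t_ge0.
rewrite exprS -natr1; nra.
Qed.

Lemma natrM_expr_le (s : R) n : 0 < s < 1 -> n%:R * s ^+ n <= (s^-1 - 1)^-1.
Proof.
case/andP => s_gt0 s_lt1; set t := s^-1 - 1.
have t_gt0 : 0 < t by rewrite subr_gt0 invf_gt1.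
have st : (1 + t) * s = 1 by rewrite /t addrC subrK mulVf ?gt_eqF.
have := @bernoulli_ineq t n (ltW t_gt0).
rewrite -(ler_pM2r (exprn_gt0 n s_gt0)) -exprMn st expr1n => bern.
rewrite -(ler_pM2r t_gt0) mulVf ?gt_eqF //.
have := exprn_gt0 n s_gt0; nra.
Qed.

Lemma cvg_natrM_expr (r : R) : 0 < r < 1 -> n%:R * r ^+ n @[n --> \oo] --> 0.
Proof.
case/andP => r_gt0 r_lt1; pose s : R := Num.sqrt r.
have s_gt0 : 0 < s by rewrite sqrtr_gt0.
have s_lt1 : s < 1 by rewrite -sqrtr1 ltr_sqrt.
have rE n : r ^+ n = s ^+ n * s ^+ n.
  by rewrite -exprD addnn -mul2n exprM sqr_sqrtr // ltW.
pose M : R := (s^-1 - 1)^-1.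
apply: (@squeeze_cvgr _ _ _ _ (cst 0) (fun n => M * s ^+ n)).
- near=> n; have s_ge0 := ltW s_gt0; apply/andP; split.
    by rewrite mulr_ge0 // exprn_ge0 // ltW.
  by rewrite rE mulrA ler_wpM2r ?exprn_ge0 // natrM_expr_le // s_gt0.
- exact: cvg_cst.
- by rewrite -(mulr0 M); apply: cvgMl_tmp; apply: cvg_expr; rewrite gtr0_norm.
Unshelve. all: end_near.
Qed.

Lemma cvg_natrS_expr_subn (r : R) k :
  0 < r < 1 -> n.+1%:R * r ^+ (n - k) @[n --> \oo] --> 0.
Proof.
move=> r01; have /andP[r_gt0 r_lt1] := r01.
have r_unit : r \is a GRing.unit by rewrite unitfE gt_eqF.
have lim : (n%:R * r ^+ n + r ^+ n) * r ^- k @[n --> \oo] --> (0 + 0) * r ^- k.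
  apply: cvgMr_tmp; apply: cvgD; first exact: cvg_natrM_expr.
  by apply: cvg_expr; rewrite gtr0_norm.
rewrite addr0 mul0r in lim; apply: (cvg_trans _ lim).
apply: near_eq_cvg; near=> n.
have kn : (k <= n)%N by near: n; exact: nbhs_infty_ge.
by rewrite exprB // -natr1; ring.
Unshelve. all: end_near.
Qed.

Lemma expr_le_subn_powR (G r p : R) (k n : nat) : 0 <= G <= r -> r <= 1 ->
  0 < p -> p <= k%:R -> (k <= n)%N -> G ^+ n <= r ^+ (n - k) * G `^ p.
Proof.
move=> /andP[G_ge0 Gr] r_le1 p_gt0 pk kn.
have k_gt0 : (0 < k)%N by rewrite -(ltr0n R) (lt_le_trans p_gt0).
rewrite -(subnK kn) exprD subnK //.
apply: ler_pM; rewrite ?exprn_ge0 ?lerXn2r ?nnegrE ?(le_trans G_ge0) //.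
have [G0|G_neq0] := eqVneq G 0; first by rewrite G0 expr0n gtn_eqF ?powR_ge0.
have G_le1 : G <= 1 by rewrite (le_trans Gr).
rewrite -powR_mulrn // -[k%:R](subrKC p) powRD ?G_neq0 ?implybT //.
rewrite -[leRHS]mulr1 ler_wpM2l ?powR_ge0 //.
have : G `^ (k%:R - p) <= 1 `^ (k%:R - p).
  by apply: ge0_ler_powR; rewrite ?nnegrE ?subr_ge0.
by rewrite powR1.
Qed.

End geometric_decay.

Section behaviour_near_zero.
Context {R : realType}.
Local Notation mu := lebesgue_measure.

Lemma continuous_onemMXn (b : R) n : continuous (fun x => (1 - b * x) ^+ n).
Proof.
move=> x; apply: (@continuous_comp _ _ _ (fun y => 1 - b * y) (fun y => y ^+ n)).
  by apply: cvgB; [exact: cvg_cst | exact: mulrl_continuous].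
exact: exprn_continuous.
Qed.

Lemma integral_onemMXn (b eta : R) n : 0 < b -> 0 < eta ->
  (\int[mu]_(x in `[0%R, eta]) ((1 - b * x) ^+ n)%:E =
   ((1 - (1 - b * eta) ^+ n.+1) / (b * n.+1%:R))%:E)%E.
Proof.
move=> b_gt0 eta_gt0; have b_neq0 := lt0r_neq0 b_gt0.
pose G := ((cst 1 - *:%R b) ^+ n.+1 * cst (- (b * n.+1%:R))^-1)%R : R -> R.
have GE x : G x = (1 - b * x) ^+ n.+1 / - (b * n.+1%:R) by rewrite /G /= exprfctE.
have dG x : is_derive x (1 : R) G ((1 - b * x) ^+ n).
  apply: is_derive_eq; rewrite scaler0 add0r -[b%:A]/(b * 1).
  change ((- (b * n.+1%:R))^-1 * ((n.+1%:R * (1 - b * x) ^+ n) * (0 - b * 1)) =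
    (1 - b * x) ^+ n).
  by field; rewrite b_neq0 andbT addrC natr1 pnatr_eq0.
have G_cont : continuous G.
  rewrite (funext GE) => x; apply: cvgM; [exact: continuous_onemMXn | exact: cvg_cst].
rewrite (@continuous_FTC2 _ _ G 0 eta) //.
- rewrite !GE mulr0 subr0 expr1n; congr (_%:E).
  by field; rewrite b_neq0 andbT addrC natr1 pnatr_eq0.
- by apply: continuous_in_subspaceT => x _; exact: continuous_onemMXn.
- split; first by move=> x _; have [] := dG x.
  + by apply: cvg_at_right_filter; exact: G_cont.
  + by apply: cvg_at_left_filter; exact: G_cont.
- by move=> x _; rewrite derive1E; exact: derive_val.
Qed.

Lemma integral_itv0_cst (k x : R) : 0 <= x ->
  (\int[mu]_(t in `[0%R, x]) k%:E = (k * x)%:E)%E.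
Proof.
move=> x_ge0; rewrite integral_cst //.
have := @lebesgue_measure_itv R `[0%R, x]; rewrite /= lte_fin => ->.
by case: ltgtP x_ge0 => // [x_gt0 _|<- _]; rewrite ?sube0 ?EFinM // mulr0 mule0.
Qed.

Definition right_linear_at0 (F : R -> R) (c : R) :=
  forall e : R, 0 < e -> exists2 eta : R, 0 < eta &
    forall x, 0 <= x <= eta -> (c - e) * x <= F x <= (c + e) * x.

Lemma right_linear_at0_small {F : R -> R} {c e M : R} :
  right_linear_at0 F c -> 0 < e -> 0 < M ->
  exists2 eta : R, 0 < eta < M &
    forall x, 0 <= x <= eta -> (c - e) * x <= F x <= (c + e) * x.
Proof.
move=> Flin e_gt0 M_gt0; have [eta0 eta0_gt0 Fb] := Flin e e_gt0.
exists (Num.min eta0 (M / 2)).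
  by rewrite lt_min gt_min eta0_gt0 divr_gt0 //=; apply/orP; right; lra.
by move=> x /andP[x_ge0]; rewrite le_min => /andP[x_le _]; rewrite Fb ?x_ge0.
Qed.

Lemma right_linear_at0_ge0 {F : R -> R} {c : R} :
  (forall x, 0 <= F x) -> right_linear_at0 F c -> 0 <= c.
Proof.
move=> F_ge0 Flin; rewrite leNgt; apply/negP => c_lt0.
have [eta eta_gt0 Fb] := Flin (- c / 2) ltac:(lra).
have := Fb eta; rewrite lexx ltW // => /(_ isT) /andP[_].
have := F_ge0 eta; nra.
Qed.

Lemma density_right_linear_at0 {F f : R -> R} {delta : R} : 0 < delta ->
  {within `[0, delta], continuous f} ->
  (forall x, x \in `[0, delta] ->
     (F x)%:E = (\int[mu]_(t in `[0%R, x]) (f t)%:E)%E) ->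
  right_linear_at0 F (f 0).
Proof.
move=> delta_gt0 f_cont FE e e_gt0.
have [_ f_cont0 _] := (continuous_within_itvP f delta_gt0).1 f_cont.
have [r /= r_gt0 f_near0] := (nbhs_ballP _ _).1 ((cvgrPdist_le _ _).1 f_cont0 e e_gt0).
pose eta := Num.min delta (r / 2).
have eta_le : eta <= delta by rewrite ge_min lexx.
have eta_lt : eta < r by rewrite gt_min; apply/orP; right; lra.
have f_bounds t : 0 <= t <= eta -> f 0 - e <= f t <= f 0 + e.
  case/andP => t_ge0 t_le; suff : `|f 0 - f t| <= e.
    by rewrite ler_norml => /andP[? ?]; apply/andP; split; lra.
  have [<-|t_gt0] := eqVneq 0 t; first by rewrite subrr normr0 ltW.
  apply: f_near0; last by rewrite lt_def eq_sym t_gt0.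
  by rewrite /ball /= sub0r normrN ger0_norm //; lra.
exists eta; first by rewrite lt_min delta_gt0 divr_gt0.
move=> x /andP[x_ge0 x_le].
have f_int : mu.-integrable `[0%R, x] (EFin \o f).
  apply: continuous_compact_integrable; first exact: segment_compact.
  by apply: continuous_subspaceW f_cont; apply: subset_itvl; rewrite bnd_simp; lra.
have cst_int k : mu.-integrable `[0%R, x] (fun=> k%:E).
  apply: continuous_compact_integrable; first exact: segment_compact.
  by apply: continuous_subspaceT => ?; exact: cst_continuous.
have f_bounds_x t : t \in `[0%R, x] -> f 0 - e <= f t <= f 0 + e.
  by rewrite in_itv /= => /andP[t_ge0 t_le]; rewrite f_bounds // t_ge0; lra.
rewrite -!lee_fin FE; last by rewrite in_itv /= x_ge0; lra.
rewrite -!integral_itv0_cst //; apply/andP; split; apply: le_integral => //.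
- by move=> t; rewrite inE /= => /f_bounds_x /andP[? _]; rewrite lee_fin.
- by move=> t; rewrite inE /= => /f_bounds_x /andP[_ ?]; rewrite lee_fin.
Qed.

End behaviour_near_zero.

Section integral_ccdf_pow.
Context {R : realType} {F : R -> R} {c p : R}.
Local Notation mu := lebesgue_measure.
Hypothesis F_le1 : forall x, F x <= 1.
Hypothesis F_nd : {homo F : x y / x <= y}.
Hypotheses (c_gt0 : 0 < c) (F_lin : right_linear_at0 F c).
Hypotheses (p_gt0 : 0 < p)
  (F_Lp : (\int[mu]_(x in `[0%R, +oo[) (`|1 - F x| `^ p)%:E < +oo)%E).

Local Notation I n := (\int[mu]_(x in `[0%R, +oo[) ((1 - F x) ^+ n)%:E)%E.
Local Notation J := (\int[mu]_(x in `[0%R, +oo[) (`|1 - F x| `^ p)%:E)%E.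

Let onemF_ge0 x : 0 <= 1 - F x. Proof. by rewrite subr_ge0. Qed.

Let onemFX_ge0 n x : (0 <= ((1 - F x) ^+ n)%:E)%E.
Proof. by rewrite lee_fin exprn_ge0. Qed.

Let measurable_onemF D : measurable D -> measurable_fun D (fun x => 1 - F x).
Proof.
by move=> mD; apply: nonincreasing_measurable => // x y xy; rewrite lerD2l lerN2 F_nd.
Qed.

Let measurable_onemFX D n : measurable D ->
  measurable_fun D (fun x => ((1 - F x) ^+ n)%:E).
Proof.
by move=> mD; apply/measurable_EFinP; apply: measurable_funX; exact: measurable_onemF.
Qed.

Let measurable_onemF_powR D : measurable D ->
  measurable_fun D (fun x => (`|1 - F x| `^ p)%:E).
Proof.
move=> mD; apply/measurable_EFinP.
apply: (measurableT_comp (measurable_powR _)).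
by apply: measurableT_comp; [exact: normr_measurable | exact: measurable_onemF].
Qed.

Let measurable_onemMXn D (b : R) n : measurable D ->
  measurable_fun D (fun x => ((1 - b * x) ^+ n)%:E).
Proof.
move=> mD; apply/measurable_EFinP.
exact: measurable_funS (continuous_measurable_fun (continuous_onemMXn b n)).
Qed.

Lemma integral_ccdf_pow_ge {b eta : R} n : 0 < b -> 0 < eta -> b * eta <= 1 ->
  (forall x, 0 <= x <= eta -> F x <= b * x) ->
  (((1 - (1 - b * eta) ^+ n.+1) / (b * n.+1%:R))%:E <= I n)%E.
Proof.
move=> b_gt0 eta_gt0 beta_le1 Fb; rewrite -integral_onemMXn //.
apply: (@le_trans _ _ (\int[mu]_(x in `[0%R, eta]) ((1 - F x) ^+ n)%:E)%E).
  apply: ge0_le_integral => //.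
  - by move=> x; rewrite /= in_itv /= => /andP[? ?]; rewrite lee_fin exprn_ge0 //; nra.
  - exact: measurable_onemMXn.
  - exact: measurable_onemFX.
  move=> x; rewrite /= in_itv /= => /andP[x_ge0 x_le].
  have := Fb x; rewrite x_ge0 x_le => /(_ isT) Fbx.
  by rewrite lee_fin lerXn2r ?nnegrE ?onemF_ge0 //; nra.
apply: ge0_subset_integral => //; first exact: measurable_onemFX.
by move=> x /=; rewrite !in_itv /= => /andP[-> _].
Qed.

Lemma integral_ccdf_pow_head_le {b eta : R} n : 0 < b -> 0 < eta -> b * eta <= 1 ->
  (forall x, 0 <= x <= eta -> b * x <= F x) ->
  (\int[mu]_(x in `[0%R, eta]) ((1 - F x) ^+ n)%:E <= ((b * n.+1%:R)^-1)%:E)%E.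
Proof.
move=> b_gt0 eta_gt0 beta_le1 Fb.
apply: (@le_trans _ _ (\int[mu]_(x in `[0%R, eta]) ((1 - b * x) ^+ n)%:E)%E).
  apply: ge0_le_integral => //.
  - exact: measurable_onemFX.
  - exact: measurable_onemMXn.
  move=> x; rewrite /= in_itv /= => /andP[x_ge0 x_le].
  have := Fb x; rewrite x_ge0 x_le => /(_ isT) Fbx.
  by rewrite lee_fin lerXn2r ?nnegrE ?onemF_ge0 //; nra.
rewrite integral_onemMXn // lee_fin ler_pdivrMr ?mulr_gt0 // mulVf ?mulf_neq0 ?gt_eqF //.
by rewrite gerBl exprn_ge0 // subr_ge0.
Qed.

Lemma integral_ccdf_pow_tail_le {b eta : R} {k : nat} n : 0 < b -> 0 < eta -> b * eta <= 1 ->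
  b * eta <= F eta -> p <= k%:R -> (k <= n)%N ->
  (\int[mu]_(x in `]eta, +oo[) ((1 - F x) ^+ n)%:E <=
   ((1 - b * eta) ^+ (n - k))%:E * J)%E.
Proof.
move=> b_gt0 eta_gt0 beta_le1 Fbeta pk kn.
apply: (@le_trans _ _ (\int[mu]_(x in `]eta, +oo[)
    (((1 - b * eta) ^+ (n - k))%:E * (`|1 - F x| `^ p)%:E))%E).
  apply: ge0_le_integral => //.
  - exact: measurable_onemFX.
  - by apply: emeasurable_funM; [exact: measurable_cst | exact: measurable_onemF_powR].
  move=> x; rewrite /= in_itv /= andbT => etax.
  rewrite -EFinM lee_fin ger0_norm // expr_le_subn_powR //; last first.
    by rewrite gerBl mulr_ge0 // ltW.
  by rewrite onemF_ge0 lerD2l lerN2 (le_trans Fbeta) // F_nd // ltW.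
have r_ge0 : 0 <= (1 - b * eta) ^+ (n - k) by rewrite exprn_ge0 // subr_ge0.
rewrite (ge0_integralZl_EFin mu _ (f1 := fun x => (`|1 - F x| `^ p)%:E)) //;
  last exact: measurable_onemF_powR.
rewrite lee_wpmul2l ?lee_fin //.
apply: ge0_subset_integral => //; first exact: measurable_onemF_powR.
by move=> x /=; rewrite !in_itv /= !andbT => /ltW; apply: le_trans; exact: ltW.
Qed.

Lemma integral_ccdf_pow_le {b eta : R} {k : nat} n : 0 < b -> 0 < eta -> b * eta <= 1 ->
  (forall x, 0 <= x <= eta -> b * x <= F x) -> p <= k%:R -> (k <= n)%N ->
  (I n <= ((b * n.+1%:R)^-1)%:E + ((1 - b * eta) ^+ (n - k))%:E * J)%E.
Proof.
move=> b_gt0 eta_gt0 beta_le1 Fb pk kn.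
have split0 : `[0%R, +oo[%classic = `[0%R, eta]%classic `|` `]eta, +oo[%classic :> set R.
  by apply: itv_bndbnd_setU; rewrite bnd_simp // ltW.
rewrite {1}split0 ge0_integral_setU //; first last.
- by apply/disj_setPS => x [] /=; rewrite !in_itv /= => /andP[_ ?] /andP[? _]; lra.
- by rewrite -split0; exact: measurable_onemFX.
apply: leeD; first exact: integral_ccdf_pow_head_le.
by apply: integral_ccdf_pow_tail_le => //; rewrite Fb // lexx ltW.
Qed.

Lemma near_integral_ccdf_pow_ge (eps : R) : 0 < eps ->
  \forall n \near \oo, (((1 - eps) / (c * n.+1%:R))%:E <= I n)%E.
Proof.
move=> eps_gt0; pose b := c + c * eps.
have b_gt0 : 0 < b by rewrite addr_gt0 // mulr_gt0.
have bV_gt0 : 0 < b^-1 by rewrite invr_gt0.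
have [eta /andP[eta_gt0 eta_lt] Fb] :=
  right_linear_at0_small F_lin (mulr_gt0 c_gt0 eps_gt0) bV_gt0.
have beta_lt1 : b * eta < 1 by rewrite -(mulfV (lt0r_neq0 b_gt0)) ltr_pM2l.
have beta_gt0 : 0 < b * eta by rewrite mulr_gt0.
have q_ge0 : 0 <= 1 - b * eta by rewrite subr_ge0 ltW.
have q_norm_lt1 : `|1 - b * eta| < 1 by rewrite ger0_norm; lra.
have q_small := cvgr0_norm_le _ (cvg_expr q_norm_lt1) _ (exprn_gt0 2 eps_gt0).
near=> n.
have qn : (1 - b * eta) ^+ n.+1 <= eps ^+ 2.
  have : `|(1 - b * eta) ^+ n| <= eps ^+ 2 by near: n; exact: q_small.
  rewrite ger0_norm ?exprn_ge0 // => /(le_trans _); apply.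
  by rewrite exprS ler_piMl ?exprn_ge0 //; lra.
have Fb' x : 0 <= x <= eta -> F x <= b * x by move/Fb => /andP[].
apply: le_trans _ (integral_ccdf_pow_ge n b_gt0 eta_gt0 (ltW beta_lt1) Fb').
have -> : (1 - eps) / (c * n.+1%:R) = (1 - eps ^+ 2) / (b * n.+1%:R).
  by rewrite /b; field; rewrite ?gt_eqF // addr_gt0.
by rewrite lee_fin ler_pM2r ?invr_gt0 ?mulr_gt0 //; lra.
Unshelve. all: end_near.
Qed.

Lemma near_integral_ccdf_pow_le (eps : R) : 0 < eps ->
  \forall n \near \oo, (I n <= ((1 + eps) / (c * n.+1%:R))%:E)%E.
Proof.
(* The slope b = c / (1 + eps/2) leaves eps/2 of room for the tail. *)
move=> eps_gt0; pose e := c * eps / (2 + eps); pose b := c - e.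
have bE : b = c * 2 / (2 + eps) by rewrite /b /e; field; rewrite gt_eqF // addr_gt0.
have b_gt0 : 0 < b by rewrite bE divr_gt0 ?mulr_gt0 ?addr_gt0.
have bV_gt0 : 0 < b^-1 by rewrite invr_gt0.
have e_gt0 : 0 < e by rewrite divr_gt0 ?mulr_gt0 ?addr_gt0.
have [eta /andP[eta_gt0 eta_lt] Fb] := right_linear_at0_small F_lin e_gt0 bV_gt0.
have beta_lt1 : b * eta < 1 by rewrite -(mulfV (lt0r_neq0 b_gt0)) ltr_pM2l.
have beta_gt0 : 0 < b * eta by rewrite mulr_gt0.
have r01 : 0 < 1 - b * eta < 1 by apply/andP; split; lra.
pose k := (Num.truncn p).+1.
have pk : p <= k%:R by exact/ltW/truncnS_gt.
have J_fin : J \is a fin_num.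
  by rewrite ge0_fin_numE // integral_ge0 // => x _; rewrite lee_fin powR_ge0.
pose j := fine J.
have tail_cvg : n.+1%:R * (1 - b * eta) ^+ (n - k) * (c * j) @[n --> \oo] --> 0.
  by rewrite -(mul0r (c * j)); apply: cvgMr_tmp; exact: cvg_natrS_expr_subn.
near=> n.
have kn : (k <= n)%N by near: n; exact: nbhs_infty_ge.
have tail_small : `|n.+1%:R * (1 - b * eta) ^+ (n - k) * (c * j)| <= eps / 2.
  by near: n; apply: (cvgr0_norm_le _ tail_cvg); rewrite divr_gt0.
have Fb' x : 0 <= x <= eta -> b * x <= F x by move/Fb => /andP[].
apply: le_trans (integral_ccdf_pow_le n b_gt0 eta_gt0 (ltW beta_lt1) Fb' pk kn) _.
rewrite -(fineK J_fin) -EFinM -EFinD lee_fin -/j.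
have -> : (1 + eps) / (c * n.+1%:R) = (b * n.+1%:R)^-1 + eps / 2 / (c * n.+1%:R).
  by rewrite bE; field; rewrite ?gt_eqF // addr_gt0.
rewrite lerD2l ler_pdivlMr ?mulr_gt0 //; apply: le_trans (ler_norm _) _.
suff -> : (1 - b * eta) ^+ (n - k) * j * (c * n.+1%:R) =
  n.+1%:R * (1 - b * eta) ^+ (n - k) * (c * j) by [].
by ring.
Unshelve. all: end_near.
Qed.

Lemma near_integral_ccdf_pow_fin : \forall n \near \oo, I n \is a fin_num.
Proof.
have ub := near_integral_ccdf_pow_le 1 ltr01.
near=> n; rewrite ge0_fin_numE; last by apply: integral_ge0 => x _.
apply: le_lt_trans (ltry ((1 + 1) / (c * n.+1%:R))).
by near: n; exact: ub.
Unshelve. all: end_near.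
Qed.

Lemma cvg_integral_ccdf_pow : fine (I n) * (c * n.+1%:R) @[n --> \oo] --> (1 : R).
Proof.
apply/cvgrPdist_le => e e_gt0; near=> n.
have N_gt0 : 0 < c * n.+1%:R by rewrite mulr_gt0.
have I_fin : I n \is a fin_num by near: n; exact: near_integral_ccdf_pow_fin.
have lb : (((1 - e) / (c * n.+1%:R))%:E <= I n)%E.
  by near: n; exact: near_integral_ccdf_pow_ge.
have ub : (I n <= ((1 + e) / (c * n.+1%:R))%:E)%E.
  by near: n; exact: near_integral_ccdf_pow_le.
rewrite -(fineK I_fin) lee_fin ler_pdivrMr // in lb.
rewrite -(fineK I_fin) lee_fin ler_pdivlMr // in ub.
by rewrite distrC ler_distl; apply/andP; split; lra.
Unshelve. all: end_near.
Qed.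

End integral_ccdf_pow.

Theorem theorem3 (R : realType)
  (d : nat -> measure_display) (Omega : forall n, measurableType (d n))
  (P : forall n, probability (Omega n) R)
  (X : forall n, 'I_n -> {mfun Omega n >-> R})
  (F f : R -> R) (delta : R) :
  (* for each n, X n is an independent family of n random variables *)
  (forall n, mutually_independent (P n) (fun i => (X n i : Omega n -> R))) ->
  (* values in [0, +oo) *)
  (forall n i w, 0 <= X n i w) ->
  (* common distribution function F *)
  (forall n i x, P n [set w | X n i w <= x] = (F x)%:E) ->
  (* (1) continuous, nonvanishing density f of F on a neighbourhood [0, delta] of 0 *)
  0 < delta ->
  {within `[0, delta], continuous f} ->
  (forall x, x \in `[0, delta] -> f x != 0) ->
  (forall x, x \in `[0, delta] ->
     (F x)%:E = (\int[lebesgue_measure]_(t in `[0%R, x]) (f t)%:E)%E) ->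
  (* (2) 1 - F in L^p([0, oo)) for some p > 0 *)
  (exists2 p : R, 0 < p &
     (\int[lebesgue_measure]_(x in `[0%R, +oo[) ((`|1 - F x| `^ p)%:E) < +oo)%E) ->
  (* conclusion: E(min) ~ 1 / (f(0) (n+1)) *)
  (\forall n \near \oo, (expect_min (P n) (fun i => (X n i : Omega n -> R)) < +oo)%E) /\
  ((fun n : nat => fine (expect_min (P n) (fun i => (X n i : Omega n -> R)))
       / (1 / (f 0 * n.+1%:R))) @ \oo --> (1 : R)).
Proof.
move=> indep X_ge0 XF delta_gt0 f_cont f_neq0 FE [p p_gt0 F_Lp].
have F_ge0 := cdf_ge0 (XF 1%N ord0).
have F_le1 := cdf_le1 (XF 1%N ord0).
have F_nd := cdf_nondecreasing (XF 1%N ord0).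
have F_lin := density_right_linear_at0 delta_gt0 f_cont FE.
have f0_gt0 : 0 < f 0.
  rewrite lt_def (right_linear_at0_ge0 F_ge0 F_lin) andbT.
  by apply: f_neq0; rewrite in_itv /= lexx ltW.
have EminE : \forall n \near \oo,
    expect_min (P n) (fun i => (X n i : Omega n -> R)) =
    (\int[lebesgue_measure]_(x in `[0%R, +oo[) ((1 - F x) ^+ n)%:E)%E.
  by apply: filterS (nbhs_infty_gt 0) => n n_gt0; exact: expect_minE.
split.
  apply: filterS2 _ EminE
    (near_integral_ccdf_pow_fin F_le1 F_nd f0_gt0 F_lin p_gt0 F_Lp).
  by move=> n -> /fin_numPlt/andP[].
apply: cvg_trans _ (cvg_integral_ccdf_pow F_le1 F_nd f0_gt0 F_lin p_gt0 F_Lp).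
by apply: near_eq_cvg; apply: filterS EminE => n ->; rewrite div1r invrK.
Qed.
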